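(* Let $A,s$ be positive integers and $(\alpha,\beta)\in(\mathbb{Z}/s\mathbb{Z})^2$, and let $S_{A,\alpha,\beta,s}=\{[A,b,a] : (a,b)\equiv(\alpha,\beta)\pmod s,\ Aa-b^2>0\}$. Let $K,L$ be $\mathbb{Z}$-lattices on the same quadratic space such that $K\prec_{A,(\alpha,\beta),s}L$, and let $\ell\in S_{A,\alpha,\beta,s}$. If $\ell$ is represented by $K$, then $\ell$ is represented by $L$. In particular, if $M\prec_{A,(\alpha,\beta),s}L$ for every $M\in\mathrm{gen}(L)$, then $\ell$ being represented by some lattice in $\mathrm{gen}(L)$ implies that $\ell$ is represented by $L$.
   Context: All $\mathbb{Z}$-lattices are free $\mathbb{Z}$-modules of finite rank with a positive definite, integral symmetric bilinear form $B$; $Q(v)=B(v,v)$. A representation $\sigma:\ell\to L$ is a linear map with $B(\sigma x,\sigma y)=B(x,y)$ for all $x,y\in\ell$; $\ell$ is represented by $L$ if one exists. $[A,b,a]$ denotes the binary lattice $\mathbb{Z}v_1+\mathbb{Z}v_2$ with $Q(v_1)=A$, $B(v_1,v_2)=b$, $Q(v_2)=a$. $\mathrm{gen}(L)$ is the set of lattices $K$ on the quadratic space $V=\mathbb{Q}L$ with $K_p\cong L_p$ (over $\mathbb{Z}_p$) for all primes $p$. $R(A,K)=\{v\in K: Q(v)=A\}$. For $\mathbb{Z}$-lattices $K,L$ on the same quadratic space $V$, $v\in R(A,K)$ and $(\alpha,\beta)\in(\mathbb{Z}/s\mathbb{Z})^2$, set $R_v(K,\alpha,\beta,s)=\{u\in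 K/sK: Q(u)\equiv\alpha,\ B(u,v)\equiv\beta \pmod s\}$ and $R_v(K,L,s)=\{\tau\in O(V):\tau(sK)\subseteq L,\ \tau(v)\in L\}$. A coset $u\in R_v(K,\alpha,\beta,s)$ is good if there is $\tau\in R_v(K,L,s)$ with $\tau(\tilde u)\in L$ for all $\tilde u\in K$ with $\tilde u\equiv u\pmod{sK}$. We write $K\prec_{A,(\alpha,\beta),s}L$ if for every $v\in R(A,K)$ every coset of $R_v(K,\alpha,\beta,s)$ is good. *)

From mathcomp Require Import all_boot all_order all_algebra.
Set Implicit Arguments. Unset Strict Implicit. Unset Printing Implicit Defensive.
Import Order.TTheory GRing.Theory Num.Theory.
Local Open Scope ring_scope.

(* The quadratic space V = Q^n (row vectors) with bilinear form
   B(x,y) = x G y^T, G a symmetric positive definite rational matrix.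
   Every positive definite quadratic space over Q is isometric to one of these. *)

Definition Bf (n : nat) (G : 'M[rat]_n) (x y : 'rV[rat]_n) : rat :=
  (x *m G *m y^T) 0 0.
Definition Qf (n : nat) (G : 'M[rat]_n) (x : 'rV[rat]_n) : rat := Bf G x x.

Definition sym_gram (n : nat) (G : 'M[rat]_n) : Prop := G^T = G.
Definition posdef (n : nat) (G : 'M[rat]_n) : Prop :=
  forall x : 'rV[rat]_n, x != 0 -> 0 < Qf G x.

Definition inL (n : nat) (MK : 'M[rat]_n) (v : 'rV[rat]_n) : Prop :=
  exists c : 'rV[int]_n, v = map_mx intr c *m MK.

Definition is_int_rat (x : rat) : Prop := exists z : int, x = z%:~R.

Definition gram (n : nat) (G : 'M[rat]_n) (MK : 'M[rat]_n) : 'M[rat]_n :=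
  MK *m G *m MK^T.

Definition lattice (n : nat) (G : 'M[rat]_n) (MK : 'M[rat]_n) : Prop :=
  MK \in unitmx /\ forall i j, is_int_rat (gram G MK i j).

Definition congr_rat (x y : rat) (m : int) : Prop :=
  exists z : int, x - y = (m * z)%:~R.

Definition orthogonal (n : nat) (G : 'M[rat]_n) (T : 'M[rat]_n) : Prop :=
  T *m G *m T^T = G.

(* K <_{A,(al,be),s} L : for every v in R(A,K), every coset u + sK in
   R_v(K,al,be,s) is good, i.e. there is tau in O(V) with tau(sK) <= L,
   tau(v) in L, and tau(u') in L for all u' = u (mod sK). *)
Definition prec (n : nat) (G : 'M[rat]_n) (A s : nat) (al be : int)
    (K L : 'M[rat]_n) : Prop :=
  forall v : 'rV[rat]_n, inL K v -> Qf G v = A%:R ->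
  forall u : 'rV[rat]_n, inL K u ->
    congr_rat (Qf G u) al%:~R s%:Z -> congr_rat (Bf G u v) be%:~R s%:Z ->
    exists T : 'M[rat]_n,
      orthogonal G T /\
      (forall w, inL K w -> inL L ((s%:R *: w) *m T)) /\
      inL L (v *m T) /\
      (forall w, inL K w -> inL L ((u + s%:R *: w) *m T)).

(* The lattice with Gram matrix Gl (m x m, rational) is represented by K:
   a linear map sigma (row i of X = image of i-th basis vector) into K
   preserving the form. *)
Definition represents (n m : nat) (G : 'M[rat]_n) (K : 'M[rat]_n)
    (Gl : 'M[rat]_m) : Prop :=
  exists X : 'M[rat]_(m, n), (forall i, inL K (row i X)) /\ X *m G *m X^T = Gl.

Definition binmx (A b a : int) : 'M[rat]_2 :=
  \matrix_(i < 2, j < 2)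
    (if i == ord0 then (if j == ord0 then A%:~R else b%:~R)
     else (if j == ord0 then b%:~R else a%:~R)).

Definition in_S (A s : nat) (al be : int) (b a : int) : Prop :=
  (a = al %[mod s%:Z])%Z /\ (b = be %[mod s%:Z])%Z /\ 0 < A%:Z * a - b ^+ 2.

(* Z_p realised as the inverse limit of Z/p^kZ: a matrix over Z_p is a
   compatible sequence of integer matrices U_k (U_{k+1} = U_k mod p^k);
   it is invertible over Z_p iff det U_1 is a unit mod p; the identity
   U G1 U^T = G2 over Z_p means it holds mod p^k for every k. *)
Definition zp_isometric (p : nat) (n : nat) (G1 G2 : 'M[rat]_n) : Prop :=
  exists U : nat -> 'M[int]_n,
    (forall k i j, (((p ^ k)%N)%:Z %| U k.+1 i j - U k i j)%Z) /\
    ~~ ((p%:Z %| \det (U 1%N))%Z) /\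
    (forall k i j,
        congr_rat ((map_mx intr (U k) *m G1 *m (map_mx intr (U k))^T) i j)
                  (G2 i j) ((p ^ k)%N)%:Z).

Definition in_gen (n : nat) (G : 'M[rat]_n) (M L : 'M[rat]_n) : Prop :=
  lattice G M /\ forall p, prime p -> zp_isometric p (gram G M) (gram G L).

From Pilot Require Import Defs.
From mathcomp Require Import all_boot all_order all_algebra.
Import Order.TTheory GRing.Theory Num.Theory.
Local Open Scope ring_scope.

(* If sigma represents [A,b,a] by K with sigma(e1) = v and sigma(e2) = u, then
   Q(v) = A, Q(u) = a = alpha and B(u,v) = b = beta (mod s), so the coset u + sK
   lies in R_v(K,alpha,beta,s).  Its goodness gives an isometry tau of V with
   tau(v) and tau(u) in L, and tau o sigma represents [A,b,a] by L.  The genus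
   statement is the case K = M. *)

Lemma congr_rat_modz (x y : int) (s : nat) :
  (x = y %[mod s%:Z])%Z -> congr_rat x%:~R y%:~R s%:Z.
Proof.
move=> /eqP; rewrite eqz_mod_dvd => /dvdzP [q Hq].
by exists q; rewrite -intrB Hq mulrC.
Qed.

Lemma inL0 (n : nat) (K : 'M[rat]_n) : inL K 0.
Proof. by exists 0; rewrite map_mx0 mul0mx. Qed.

Lemma Bf_row (n m : nat) (G : 'M[rat]_n) (X : 'M[rat]_(m, n)) i j :
  Bf G (row i X) (row j X) = (X *m G *m X^T) i j.
Proof.
rewrite /Bf -row_mul tr_row -row_mul !mxE; apply: eq_bigr => k _.
by rewrite !mxE.
Qed.

(* [Defs.] is needed below: the MathComp imports shadow [orthogonal]. *)
Lemma orthogonal_gram (n m : nat) (G T : 'M[rat]_n) (X : 'M[rat]_(m, n)) :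
  Defs.orthogonal G T -> X *m T *m G *m (X *m T)^T = X *m G *m X^T.
Proof.
move=> oT; rewrite trmx_mul !mulmxA -(mulmxA X T G) -(mulmxA X (T *m G) T^T).
by rewrite oT.
Qed.

Lemma represents_orthogonal (n m : nat) (G T L : 'M[rat]_n)
    (X : 'M[rat]_(m, n)) :
  Defs.orthogonal G T -> (forall i, inL L (row i X *m T)) ->
  represents G L (X *m G *m X^T).
Proof.
move=> oT XT_L; exists (X *m T); split; last exact: orthogonal_gram.
by move=> i; rewrite row_mul.
Qed.

Lemma prec_represents_binmx (n : nat) (G : 'M[rat]_n) (A s : nat)
    (al be b a : int) (K L : 'M[rat]_n) :
  in_S A s al be b a -> prec G A s al be K L ->
  represents G K (binmx A%:Z b a) -> represents G L (binmx A%:Z b a).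
Proof.
move=> [a_al [b_be _]] precKL [X [X_K gramX]].
have Q_v : Qf G (row 0 X) = A%:R by rewrite /Qf Bf_row gramX mxE /= pmulrn.
have Q_u : congr_rat (Qf G (row 1 X)) al%:~R s%:Z.
  by rewrite /Qf Bf_row gramX mxE; exact: congr_rat_modz.
have B_uv : congr_rat (Bf G (row 1 X) (row 0 X)) be%:~R s%:Z.
  by rewrite Bf_row gramX mxE; exact: congr_rat_modz.
have [T [oT [_ [vT_L uT_L]]]] := precKL _ (X_K 0) Q_v _ (X_K 1) Q_u B_uv.
rewrite -gramX; apply: represents_orthogonal oT _.
case=> [[|[|//]] lti2].
- by rewrite (_ : Ordinal lti2 = 0) //; apply: val_inj.
- rewrite (_ : Ordinal lti2 = 1); last exact: val_inj.
  by have := uT_L _ (inL0 _ K); rewrite scaler0 addr0.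
Qed.

Theorem lemma2p2 (n : nat) (G : 'M[rat]_n) (A s : nat) (al be b a : int) :
  sym_gram G -> posdef G -> (0 < A)%N -> (0 < s)%N ->
  in_S A s al be b a ->
  (forall K L : 'M[rat]_n, lattice G K -> lattice G L ->
     prec G A s al be K L ->
     represents G K (binmx A%:Z b a) -> represents G L (binmx A%:Z b a)) /\
  (forall L : 'M[rat]_n, lattice G L ->
     (forall M : 'M[rat]_n, in_gen G M L -> prec G A s al be M L) ->
     (exists M : 'M[rat]_n, in_gen G M L /\ represents G M (binmx A%:Z b a)) ->
     represents G L (binmx A%:Z b a)).
Proof.
move=> _ _ _ _ ell_S; split.
  by move=> K L _ _; exact: prec_represents_binmx.
move=> L _ prec_gen [M [M_gen M_ell]].
exact: prec_represents_binmx ell_S (prec_gen _ M_gen) M_ell.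
Qed.
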